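(* Let $0\le\lambda_2\le1$ and let $\theta:[0,1]\to[0,1]$ be non-increasing with $\theta(t)=0$ for $t\in(\lambda_2,1]$ and $\theta(\lambda_2)>0$. Define, for $q\in(0,1]$, $$g(q)=\int_{\theta^{-1}(q)}^1\int_0^t\frac1t\cdot\frac{\min\{\theta(s),q\}^t}{q}\,\mathrm ds\,\mathrm dt,$$ where $\theta^{-1}(x)=\inf\{t\in[0,1]:\theta(t)<x\}$ (with $\inf\emptyset=1$) and $0^t=0$ for $t>0$. Then $g(q)\ge g(\theta(\lambda_2))$ for every $q\in(0,\theta(\lambda_2)]$. *)

From HB Require Import structures.
From mathcomp Require Import all_boot all_order all_algebra.
From mathcomp Require Import all_classical all_reals all_analysis.
Set Implicit Arguments. Unset Strict Implicit. Unset Printing Implicit Defensive.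
Import Order.TTheory GRing.Theory Num.Theory.
Import numFieldNormedType.Exports.
Local Open Scope classical_set_scope.
Local Open Scope ring_scope.

Definition theta_inv (R : realType) (theta : R -> R) (x : R) : R :=
  let S := [set t : R | 0 <= t <= 1 /\ theta t < x] in
  if `[< S !=set0 >] then inf S else 1.

(* g(q) = int_{theta^{-1}(q)}^1 int_0^t (1/t) * min(theta s, q)^t / q ds dt
   (Lebesgue integrals of nonnegative functions, valued in \bar R;
    powR satisfies 0 `^ t = 0 for t > 0) *)
Definition gfun (R : realType) (theta : R -> R) (q : R) : \bar R :=
  (\int[lebesgue_measure]_(t in `[theta_inv theta q, 1%R])
     ((t^-1 / q)%:E *
      \int[lebesgue_measure]_(s in `[0%R, t]) ((Order.min (theta s) q) `^ t)%:E))%E.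

From mathcomp Require Import all_boot all_order all_algebra.
From mathcomp Require Import all_classical all_reals all_analysis measurable_realfun.
From mathcomp Require Import ring.
Set Implicit Arguments. Unset Strict Implicit. Unset Printing Implicit Defensive.
Import Order.TTheory GRing.Theory Num.Theory.
Local Open Scope classical_set_scope.
Local Open Scope ring_scope.

(* For [0 < q <= theta lambda2] the set [{theta < q}] is exactly [(lambda2, 1]],
   so [theta_inv q = lambda2] and [min (theta s) q] is [q] on [[0, lambda2]] and
   [0] beyond.  Hence [g q = \int_lambda2^1 lambda2 / t * q^(t-1) dt], and since
   [t - 1 <= 0] the integrand decreases in [q]. *)

Lemma powR_divr_antitone (R : realType) (x y r : R) :
  0 < x -> x <= y -> r <= 1 -> y `^ r / y <= x `^ r / x.
Proof.
move=> x0 xy r1; have y0 := lt_le_trans x0 xy.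
have yx1 : 1 <= y / x by rewrite ler_pdivlMr // mul1r.
have -> : y `^ r = x `^ r * (y / x) `^ r.
  by rewrite -powRM ?divr_ge0 ?ltW // mulrCA divff ?mulr1 // gt_eqF.
rewrite ler_pdivrMr // -mulrA; apply: ler_wpM2l; first exact: powR_ge0.
by rewrite [_ * y]mulrC; exact: ler1_powR.
Qed.

Lemma measurable_inv_pos (R : realType) :
  measurable_fun (`]0%R, +oo[%classic : set R) (@GRing.inv R).
Proof.
apply: open_continuous_measurable_fun; first exact: interval_open.
move=> x; rewrite inE /= in_itv /= andbT => x0.
exact (@inv_continuous R x (lt0r_neq0 x0)).
Qed.

Lemma measurable_level_integrand (R : realType) (a b c q : R) : 0 < a ->
  measurable_fun `[a, b] (fun t => (c / t * (q `^ t / q))%:E).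
Proof.
move=> a0; apply/measurable_EFinP.
apply: (measurable_funS (measurable_itv `]0%R, +oo[)).
  by move=> t /=; rewrite !in_itv /= andbT => /andP[/(lt_le_trans a0)].
apply: measurable_funM.
  exact: measurable_funM (measurable_cst c) (@measurable_inv_pos R).
exact: measurable_funM (measurable_funTS (measurable_powRr q)) (measurable_cst _).
Qed.

Section level_set.
Variables (R : realType) (lambda2 : R) (theta : R -> R).
Hypotheses (hl0 : 0 <= lambda2) (hl1 : lambda2 <= 1).
Hypothesis hmono : forall s t, 0 <= s -> s <= t -> t <= 1 -> theta t <= theta s.
Hypothesis hzero : forall t, lambda2 < t <= 1 -> theta t = 0.

Lemma theta_inv_level (q : R) : 0 < q <= theta lambda2 -> theta_inv theta q = lambda2.
Proof.
case/andP=> q0 qT; rewrite /theta_inv.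
have -> : [set t : R | 0 <= t <= 1 /\ theta t < q] = [set` `]lambda2, 1]].
  apply/seteqP; split => t /=; rewrite in_itv /=.
  - move=> [/andP[t0 ->] tq]; rewrite andbT ltNge; apply/negP => tl.
    by move: (le_trans qT (hmono t0 tl hl1)); rewrite leNgt tq.
  - case/andP=> l2t t1; split; first by rewrite t1 andbT (le_trans hl0) // ltW.
    by rewrite hzero ?l2t ?t1.
have [l1|l1] := ltP lambda2 1.
  rewrite asboolT ?inf_itv //.
  by exists 1; rewrite /= in_itv /= l1 lexx.
rewrite asboolF; first by apply/eqP; rewrite eq_le hl1 l1.
by case=> x; rewrite /= in_itv /= => /andP[/lt_le_trans/[apply]]; rewrite ltNge l1.
Qed.

Lemma inner_integral_level (q t : R) : 0 < q <= theta lambda2 -> lambda2 <= t <= 1 ->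
  (\int[lebesgue_measure]_(s in `[0%R, t]) ((Order.min (theta s) q) `^ t)%:E
   = (q `^ t * lambda2)%:E)%E.
Proof.
case/andP=> q0 qT /andP[l2t t1].
transitivity (\int[lebesgue_measure]_(s in `[0%R, t])
                (q `^ t * \1_(`[0%R, lambda2]) s)%:E)%E.
  apply: eq_integral => s; rewrite inE /= in_itv /= => /andP[s0 st].
  rewrite indicE; have [sl|ls] := leP s lambda2.
    rewrite mem_set /= ?in_itv /= ?s0 ?sl // mulr1.
    by rewrite (@min_r _ _ (theta s)) // (le_trans qT) // hmono.
  rewrite memNset /= ?in_itv /= ?s0 ?(leNgt s) ?ls // mulr0.
  rewrite hzero ?ls ?(le_trans st) // (@min_l _ _ 0) ?ltW // powR0 //.
  by rewrite gt_eqF // (le_lt_trans hl0 (lt_le_trans ls st)).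
have := @integralZl_indic _ _ _ lebesgue_measure _ (measurable_itv `[0%R, t])
  (fun=> `[0%R, lambda2]%classic) (q `^ t) => /= -> //; last first.
  by move=> /lt_geF; rewrite powR_ge0.
rewrite integral_indic // setIidl; last first.
  by move=> s /=; rewrite !in_itv /= => /andP[-> /le_trans]; apply.
have := lebesgue_measure_itv `[0%R, lambda2] => /= ->; rewrite lte_fin.
have [l0|] := ltP 0 lambda2; first by rewrite oppr0 addr0 -EFinM.
by move=> l0; have -> : lambda2 = 0 by apply/eqP; rewrite eq_le hl0 l0.
Qed.

Lemma gfun_level (q : R) : 0 < q <= theta lambda2 ->
  gfun theta q = (\int[lebesgue_measure]_(t in `[lambda2, 1%R])
                    (lambda2 / t * (q `^ t / q))%:E)%E.
Proof.
move=> hq; rewrite /gfun theta_inv_level //.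
apply: eq_integral => t; rewrite inE /= in_itv /= => ht.
by rewrite inner_integral_level // -EFinM; congr EFin; ring.
Qed.

End level_set.

Theorem mainTheorem12 (R : realType) (lambda2 : R) (theta : R -> R)
  (hl0 : 0 <= lambda2) (hl1 : lambda2 <= 1)
  (hrange : forall t, 0 <= t <= 1 -> 0 <= theta t <= 1)
  (hmono : forall s t, 0 <= s -> s <= t -> t <= 1 -> theta t <= theta s)
  (hzero : forall t, lambda2 < t <= 1 -> theta t = 0)
  (hpos : 0 < theta lambda2) :
  forall q : R, 0 < q <= theta lambda2 ->
    (gfun theta (theta lambda2) <= gfun theta q)%E.
Proof.
move=> q hq; have hT : 0 < theta lambda2 <= theta lambda2 by rewrite hpos lexx.
have gE := gfun_level hl0 hl1 hmono hzero; rewrite (gE _ hT) (gE _ hq).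
have [l0|l0] := eqVneq lambda2 0.
  by rewrite !integral0_eq // => t _; rewrite l0 !mul0r.
have lpos : 0 < lambda2 by rewrite lt0r l0.
have tpos t : t \in `[lambda2, 1] -> 0 < t.
  by rewrite in_itv /= => /andP[/(lt_le_trans lpos)].
apply: ge0_le_integral; rewrite //=; try exact: measurable_level_integrand.
  by move=> t /tpos t0; rewrite lee_fin !mulr_ge0 ?invr_ge0 ?powR_ge0 // ltW.
move=> t /[dup] /tpos t0; rewrite in_itv /= => /andP[_ t1].
rewrite lee_fin; apply: ler_wpM2l; first by rewrite divr_ge0 // ltW.
by case/andP: hq => q0 qT; apply: powR_divr_antitone.
Qed.
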